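(* Let $d\ge1$ and let $\mu={}^t(a_1,\dots,a_{2d+1})\in\mathbb{C}^{2d+1}$ be a unit vector with $|a_j|=|a_{d+1+j}|$ for $j=1,\dots,d$ and $a_{d+1}=0$. Let $C_\mu\phi=2\langle\phi,\mu\rangle\mu-\phi$. Then $U(S_{\rm lazy},\mathcal{P}_{\rm lazy},C_\mu)$ has both $1$ and $-1$ as eigenvalues.
   Context: $u_1,\dots,u_d$ standard basis of $\mathbb{Z}^d$, $\mathbf{e}_1,\dots,\mathbf{e}_{2d+1}$ standard basis of $\mathbb{C}^{2d+1}$, $P_j$ orthogonal projection onto $\mathbb{C}\mathbf{e}_j$. $S_{\rm lazy}=\{0,\pm u_1,\dots,\pm u_d\}$, $\mathcal{P}_{\rm lazy}=\{P_\alpha\}$ with $P_{u_j}=P_j$, $P_0=P_{d+1}$, $P_{-u_j}=P_{d+1+j}$. $(\tau^\alpha f)(x)=f(x-\alpha)$ on $\ell^2(\mathbb{Z}^d,\mathbb{C}^{2d+1})$, $U(S,\mathcal{P},C)=\big(\sum_{\alpha\in S}\tau^\alpha P_\alpha\big)C$ with $C$ acting pointwise; eigenvalue means point spectrum. Inner products are linear in the first argument. *)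

(* Complex scalars: an arbitrary numClosedFieldType C
   (C = the complex numbers is the intended instance). *)
From HB Require Import structures.
From mathcomp Require Import all_boot all_order all_algebra.
Set Implicit Arguments. Unset Strict Implicit. Unset Printing Implicit Defensive.
Import Order.TTheory GRing.Theory Num.Theory.
Local Open Scope ring_scope.

(* Sites of Z^d are row vectors 'rV[int]_d; the internal space C^(2d+1)
   is indexed by 'I_(2*d).+1, with 0-based indices: e_{m+1} <-> index m. *)

Definition zbasis (d m : nat) : 'rV[int]_d := \row_(i < d) ((val i == m)%:R).

(* the shift alpha attached to the internal index k (0-based):
   k < d  : P_k is P_{u_{k+1}}      (alpha = u_{k+1})
   k = d  : P_{d+1} = P_0           (alpha = 0)
   k > d  : P_{k+1} = P_{-u_{k-d}}  (alpha = - u_{k-d}) *)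
Definition lazy_shift (d : nat) (k : 'I_(2*d).+1) : 'rV[int]_d :=
  if (k < d)%N then zbasis d k
  else if k == d :> nat then 0
  else - zbasis d (k - d.+1)%N.

Definition cinner (C : numClosedFieldType) (n : nat) (phi psi : 'I_n -> C) : C :=
  \sum_(i < n) phi i * (psi i)^*.

Definition coin_mu (C : numClosedFieldType) (n : nat) (mu : 'I_n -> C)
  (phi : 'I_n -> C) : 'I_n -> C :=
  fun k => 2 * cinner phi mu * mu k - phi k.

(* U(S_lazy, P_lazy, C) f (x) = sum_alpha P_alpha (C f)(x - alpha) *)
Definition U_lazy (C : numClosedFieldType) (d : nat)
  (coin : ('I_(2*d).+1 -> C) -> ('I_(2*d).+1 -> C))
  (f : 'rV[int]_d -> 'I_(2*d).+1 -> C) : 'rV[int]_d -> 'I_(2*d).+1 -> C :=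
  fun x k => coin (f (x - lazy_shift k)) k.

Definition in_l2 (C : numClosedFieldType) (d : nat)
  (f : 'rV[int]_d -> 'I_(2*d).+1 -> C) : Prop :=
  exists M : C, forall s : seq 'rV[int]_d, uniq s ->
    \sum_(x <- s) \sum_(k < (2*d).+1) `|f x k| ^+ 2 <= M.

Definition is_eigenvalue (C : numClosedFieldType) (d : nat)
  (T : ('rV[int]_d -> 'I_(2*d).+1 -> C) -> ('rV[int]_d -> 'I_(2*d).+1 -> C))
  (lam : C) : Prop :=
  exists f : 'rV[int]_d -> 'I_(2*d).+1 -> C,
    [/\ in_l2 f, (exists x k, f x k != 0) & forall x k, T f x k = lam * f x k].

(** The eigenvalue -1 is carried by the coin state e_{d+1} at the origin: it is
    orthogonal to mu, so the coin negates it, and its shift is trivial.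

    For the eigenvalue 1 put f(x, k) = mu_k when both x and x - alpha_k lie in
    the cube {0,1}^d, and 0 otherwise.  For y in the cube and a direction
    alpha = ±u_j, exactly one of y + alpha and y - alpha lies in the cube, and
    |mu| is invariant under the pairing u_j <-> -u_j; hence <f(y), mu> = 1/2,
    and the coin sends f(y) to mu - f(y), the vector mu_k restricted to those k
    with y + alpha_k in the cube.  After the shift this is f again. *)
From HB Require Import structures.
From mathcomp Require Import all_boot all_order all_algebra zify.
Import Order.TTheory GRing.Theory Num.Theory.
Local Open Scope ring_scope.
Set Implicit Arguments. Unset Strict Implicit.

Lemma sum_involution_half (R : zmodType) (I : finType) (s : I -> I)
    (P : pred I) (w : I -> R) :
  involutive s -> (forall i, w (s i) = w i) ->
  (forall i, w i != 0 -> P (s i) = ~~ P i) ->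
  (\sum_(i | P i) w i) *+ 2 = \sum_i w i.
Proof.
move=> sK ws Ps.
have sumP_sumNP : \sum_(i | P i) w i = \sum_(i | ~~ P i) w i.
  rewrite big_mkcond [RHS]big_mkcond (reindex_inj (inv_inj sK)) /=.
  apply: eq_bigr => i _; rewrite ws.
  have [->|wi0] := eqVneq (w i) 0; first by case: ifP; case: ifP.
  by rewrite Ps.
by rewrite mulr2n {2}sumP_sumNP [RHS](bigID P).
Qed.

Lemma in_l2_supported (C : numClosedFieldType) d
    (f : 'rV[int]_d -> 'I_(2*d).+1 -> C) (t : seq 'rV[int]_d) :
  (forall x, x \notin t -> forall k, f x k = 0) -> in_l2 f.
Proof.
move=> supp_f; set N := fun x => \sum_(k < (2*d).+1) `|f x k| ^+ 2.
have N_ge0 x : 0 <= N x by apply: sumr_ge0 => k _; exact: exprn_ge0.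
exists (\sum_(x <- undup t) N x) => s uniq_s.
have -> : \sum_(x <- s) N x = \sum_(x <- s | x \in t) N x.
  rewrite [RHS]big_mkcond /=; apply: eq_bigr => x _; case: ifPn => // xNt.
  by rewrite /N big1 // => k _; rewrite supp_f // normr0 expr0n.
have -> : \sum_(x <- s | x \in t) N x = \sum_(x <- undup t | x \in s) N x.
  rewrite -big_filter -[RHS]big_filter; apply: perm_big; apply: uniq_perm.
  - by rewrite filter_uniq.
  - by rewrite filter_uniq // undup_uniq.
  - by move=> x; rewrite !mem_filter mem_undup andbC.
rewrite [leRHS](bigID (mem s)) /= lerDl.
by apply: sumr_ge0 => x _; exact: N_ge0.
Qed.

Section UnitCube.

Variable d : nat.
Implicit Types (x y : 'rV[int]_d) (m : nat).

Definition in_cube x : bool := [forall i, (x 0 i == 0) || (x 0 i == 1)].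

Lemma in_cube0 : in_cube 0.
Proof. by apply/forallP => i; rewrite mxE eqxx. Qed.

Lemma in_cube_mem_bool_rows x :
  in_cube x -> x \in [seq map_mx (fun b : bool => b%:R) b | b <- enum 'rV[bool]_d].
Proof.
move=> /forallP x01; apply/mapP; exists (map_mx (fun z : int => z == 1) x).
  by rewrite mem_enum.
apply/matrixP => i j; rewrite !mxE [i]ord1.
by case/orP: (x01 j) => /eqP ->.
Qed.

Lemma in_cube_addbasis y m (lt_md : (m < d)%N) :
  in_cube y -> in_cube (y + zbasis d m) = (y 0 (Ordinal lt_md) == 0).
Proof.
move=> /forallP y01; apply/forallP/idP.
  move=> /(_ (Ordinal lt_md)); rewrite !mxE /= eqxx /=.
  by have := y01 (Ordinal lt_md); lia.
move=> ym0 i; rewrite !mxE; have := y01 i.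
case: ((i : nat) =P m) => [im|_] /=; last by lia.
have -> : i = Ordinal lt_md by exact: val_inj.
lia.
Qed.

Lemma in_cube_subbasis y m (lt_md : (m < d)%N) :
  in_cube y -> in_cube (y - zbasis d m) = (y 0 (Ordinal lt_md) == 1).
Proof.
move=> /forallP y01; apply/forallP/idP.
  move=> /(_ (Ordinal lt_md)); rewrite !mxE /= eqxx /=.
  by have := y01 (Ordinal lt_md); lia.
move=> ym1 i; rewrite !mxE; have := y01 i.
case: ((i : nat) =P m) => [im|_] /=; last by lia.
have -> : i = Ordinal lt_md by exact: val_inj.
lia.
Qed.

Lemma in_cube_addbasisN y m : (m < d)%N ->
  in_cube y -> in_cube (y + zbasis d m) = ~~ in_cube (y - zbasis d m).
Proof.
move=> lt_md y01; rewrite in_cube_addbasis // in_cube_subbasis //.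
by move/forallP: y01 => /(_ (Ordinal lt_md)); lia.
Qed.

End UnitCube.

Section LazyDirections.

Variable d : nat.
Implicit Types (k : 'I_(2*d).+1) (y : 'rV[int]_d).

(* The pairing e_j <-> e_{d+1+j} of the directions u_j and -u_j; the middle
   index d (the shift 0) is fixed. *)
Definition lazy_opp k : 'I_(2*d).+1 :=
  if (k < d)%N then inord (k + d.+1)
  else if (k : nat) == d then k else inord (k - d.+1).

Lemma val_lazy_opp k : (lazy_opp k : nat) =
  if (k < d)%N then (k + d.+1)%N else if (k : nat) == d then (k : nat) else (k - d.+1)%N.
Proof.
have := ltn_ord k; rewrite /lazy_opp; case: (ltnP k d) => [lt_kd|le_dk] lt_k.
  by apply: inordK; lia.
by case: ifP => // _; apply: inordK; lia.
Qed.

Lemma lazy_oppK : involutive lazy_opp.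
Proof.
move=> k; apply: ord_inj; have := ltn_ord k; rewrite !val_lazy_opp.
by case: (ltnP k d) => ?; case: ((k : nat) =P d) => ?; repeat case: ifP => ?; lia.
Qed.

Lemma lazy_shift_mid k : (k : nat) = d -> lazy_shift k = 0.
Proof. by move=> kd; rewrite /lazy_shift kd ltnn eqxx. Qed.

Lemma lazy_shift_opp k : lazy_shift (lazy_opp k) = - lazy_shift k.
Proof.
have := ltn_ord k; rewrite /lazy_shift val_lazy_opp; case: (ltnP k d) => k_d lt_k.
  by rewrite ifF ?ifF ?addnK //; lia.
case: eqP => [-> | kNd]; first by rewrite ltnn eqxx oppr0.
by rewrite ifT ?opprK //; lia.
Qed.

Lemma in_cube_add_lazy_shiftN y k : in_cube y -> (k : nat) != d ->
  in_cube (y + lazy_shift k) = ~~ in_cube (y - lazy_shift k).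
Proof.
move=> y01 kNd; have := ltn_ord k; rewrite /lazy_shift.
case: (ltnP k d) => [lt_kd | le_dk] lt_k; first exact: in_cube_addbasisN.
rewrite (negbTE kNd) opprK in_cube_addbasisN ?negbK //.
by move: kNd; lia.
Qed.

End LazyDirections.

Section LazyWalkEigenvectors.

Variables (C : numClosedFieldType) (d : nat) (mu : 'I_(2*d).+1 -> C).
Hypothesis mu_mid0 : mu (inord d) = 0.
Implicit Types (x y : 'rV[int]_d) (k : 'I_(2*d).+1).

Lemma mu_mid k : (k : nat) = d -> mu k = 0.
Proof.
move=> kd; rewrite -mu_mid0; congr mu; apply: ord_inj.
by rewrite inordK //; lia.
Qed.

Definition mid_state x k : C := if (x == 0) && ((k : nat) == d) then 1 else 0.

Lemma U_lazy_mid_state x k :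
  U_lazy (coin_mu mu) mid_state x k = - mid_state x k.
Proof.
have mid_state_perp y : cinner (mid_state y) mu = 0.
  rewrite /cinner big1 // => i _; rewrite /mid_state.
  by case: ifP => [/andP[_ /eqP /mu_mid ->] | _]; rewrite ?conjC0 ?mulr0 ?mul0r.
rewrite /U_lazy /coin_mu mid_state_perp mulr0 mul0r sub0r.
have [kd | kNd] := eqVneq (k : nat) d; first by rewrite lazy_shift_mid // subr0.
by rewrite /mid_state (negbTE kNd) !andbF.
Qed.

Lemma eigenvalue_N1_lazy : is_eigenvalue (U_lazy (coin_mu mu)) (-1).
Proof.
exists mid_state; split.
- apply: (@in_l2_supported _ _ _ [:: 0]) => x; rewrite inE => /negbTE xN0 k.
  by rewrite /mid_state xN0.
- exists 0, (inord d); rewrite /mid_state eqxx inordK ?eqxx ?oner_eq0 //; lia.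
- by move=> x k; rewrite U_lazy_mid_state mulN1r.
Qed.

Hypothesis mu_unit : \sum_k `|mu k| ^+ 2 = 1.
Hypothesis mu_sym : forall j : 'I_d, `|mu (inord j)| = `|mu (inord (d + 1 + j))|.

Lemma normr_mu_opp k : `|mu (lazy_opp k)| = `|mu k|.
Proof.
have := ltn_ord k; rewrite /lazy_opp; case: (ltnP k d) => [lt_kd | le_dk] lt_k.
  by rewrite -[in RHS](inord_val k) (mu_sym (Ordinal lt_kd)) addn1 addnC.
case: eqP => // kNd; have lt_kd : (k - d.+1 < d)%N by lia.
rewrite (mu_sym (Ordinal lt_kd)); congr (`|mu _|); apply: ord_inj.
by rewrite inordK /=; lia.
Qed.

Definition cube_state x k : C :=
  if in_cube x && in_cube (x - lazy_shift k) then mu k else 0.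

Lemma cinner_cube_state y : in_cube y -> cinner (cube_state y) mu *+ 2 = 1.
Proof.
move=> y01; rewrite -mu_unit.
have -> : cinner (cube_state y) mu =
          \sum_(k | in_cube (y - lazy_shift k)) `|mu k| ^+ 2.
  rewrite /cinner [RHS]big_mkcond; apply: eq_bigr => k _; rewrite /cube_state y01 /=.
  by case: ifP; rewrite ?mul0r // normCK.
apply: sum_involution_half => [|k|k]; first exact: lazy_oppK.
  by rewrite normr_mu_opp.
rewrite sqrf_eq0 normr_eq0 => muk0.
have kNd : (k : nat) != d by apply: contraNneq muk0 => /mu_mid ->.
by rewrite lazy_shift_opp opprK in_cube_add_lazy_shiftN.
Qed.

Lemma U_lazy_cube_state x k : U_lazy (coin_mu mu) cube_state x k = cube_state x k.
Proof.
rewrite /U_lazy /coin_mu; set y := x - lazy_shift k.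
have -> : x = y + lazy_shift k by rewrite subrK.
have [y01 | yN01] := boolP (in_cube y); last first.
  have -> : cinner (cube_state y) mu = 0.
    by rewrite /cinner big1 // => i _; rewrite /cube_state (negbTE yN01) mul0r.
  by rewrite /cube_state addrK (negbTE yN01) andbF mulr0 mul0r subrr.
rewrite mulr_natl cinner_cube_state // mul1r /cube_state addrK y01 andbT /=.
have [kd | kNd] := eqVneq (k : nat) d.
  by rewrite mu_mid //; case: ifP; case: ifP; rewrite ?subrr.
by rewrite in_cube_add_lazy_shiftN //; case: ifP; rewrite ?subrr ?subr0.
Qed.

Lemma cube_state_neq0 : exists x k, cube_state x k != 0.
Proof.
have [k muk0] : exists k, mu k != 0.
  apply/existsP; apply: contra_neqT (@oner_neq0 C) => /existsPn mu0.
  rewrite -mu_unit big1 // => k _.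
  by move: (mu0 k); rewrite negbK => /eqP ->; rewrite normr0 expr0n.
have kNd : (k : nat) != d by apply: contraNneq muk0 => /mu_mid ->.
have [shift01 | shiftN01] := boolP (in_cube (0 + lazy_shift k)).
  exists (lazy_shift k), k.
  by rewrite /cube_state subrr in_cube0 -[lazy_shift k]add0r shift01.
exists 0, k; rewrite /cube_state in_cube0.
by rewrite in_cube_add_lazy_shiftN ?in_cube0 // negbK in shiftN01; rewrite shiftN01.
Qed.

Lemma cube_state_in_l2 : in_l2 cube_state.
Proof.
apply: (@in_l2_supported _ _ _
  [seq map_mx (fun b : bool => b%:R) b | b <- enum 'rV[bool]_d]) => x x_far k.
rewrite /cube_state.
by case: ifP => // /andP[/in_cube_mem_bool_rows x_near _]; rewrite x_near in x_far.
Qed.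

Lemma eigenvalue_1_lazy : is_eigenvalue (U_lazy (coin_mu mu)) 1.
Proof.
exists cube_state; split; [exact: cube_state_in_l2 | exact: cube_state_neq0 |].
by move=> x k; rewrite U_lazy_cube_state mul1r.
Qed.

End LazyWalkEigenvectors.

Theorem theorem3p5 (C : numClosedFieldType) (d : nat) (hd : (1 <= d)%N)
  (mu : 'I_(2*d).+1 -> C)
  (hunit : \sum_(i < (2*d).+1) `|mu i| ^+ 2 = 1)
  (hsym : forall j : 'I_d, `|mu (inord j)| = `|mu (inord (d + 1 + j))|)
  (hmid : mu (inord d) = 0) :
  is_eigenvalue (U_lazy (coin_mu mu)) 1 /\ is_eigenvalue (U_lazy (coin_mu mu)) (-1).
Proof.
(* [hd] is redundant: for d = 0 the only coin state is the middle one, where mu vanishes. *)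
by split; [exact: eigenvalue_1_lazy | exact: eigenvalue_N1_lazy].
Qed.
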